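(* Let $\mathfrak{g}$, $P$, $QT_{\mathfrak{g}}$ and $\tau_\pm$ be as in the context, and for $\gamma\in SL(2,\mathbb{Z})$ let $A_\gamma$ denote the corresponding automorphism of $QT_{\mathfrak{g}}$ generated by $\tau_\pm$ (with the composition convention of the context). If $\gamma=\begin{pmatrix} b & a\\ p & r\end{pmatrix}\in SL(2,\mathbb{Z})$, then for all $\lambda,\mu\in P$, $$A_\gamma(Y^\lambda X^\mu)=q^{-2(\mu,\mu)ab-4(\mu,\lambda)ap-2(\lambda,\lambda)pr}\,Y^{r\lambda+a\mu}X^{p\lambda+b\mu}.$$
   Context: $\mathbb{C}_q$ denotes the algebraic closure of $\mathbb{C}((q))$. Let $\mathfrak{g}$ be simply laced with invariant bilinear form $(\cdot,\cdot)$, fundamental weights $w_1,\dots,w_r$ and weight lattice $P=\bigoplus_i\mathbb{Z}w_i$; the coweight lattice $P^\vee$ is identified with $P$ via $(\cdot,\cdot)$. $QT_{\mathfrak{g}}$ is the $\mathbb{C}_q$-algebra generated by $X^\mu,Y^\lambda$ ($\mu,\lambda\in P$) with $X^\mu X^{\mu'}=X^{\mu+\mu'}$, $Y^\lambda Y^{\lambda'}=Y^{\lambda+\lambda'}$, $X^0=Y^0=1$, $X^\mu Y^\lambda=q^{-4(\mu,\lambda)}Y^\lambda X^\mu$. Writing $X_i=X^{w_i}$, $Y_i=Y^{w_i}$, the automorphism $\tau_+$ is determined by $\tau_+(X_i)=q^{-2(w_i,w_i)}Y_iX_i$, $\tau_+(Y^\lambda)=Y^\lambda$, and $\tau_-$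 by $\tau_-(X^\mu)=X^\mu$, $\tau_-(Y_i)=q^{2(w_i,w_i)}X_iY_i$. Set $T_+=\begin{pmatrix}1&1\\0&1\end{pmatrix}$, $T_-=\begin{pmatrix}1&0\\1&1\end{pmatrix}$, $A_{T_\pm}=\tau_\pm$, $A_{T_\pm^{-1}}=\tau_\pm^{-1}$; for $\gamma=M_1M_2\cdots M_k$ with each $M_j\in\{T_\pm^{\pm1}\}$, $A_\gamma:=A_{M_k}\circ\cdots\circ A_{M_1}$. *)

From HB Require Import structures.
From mathcomp Require Import all_boot all_order all_algebra.
Set Implicit Arguments. Unset Strict Implicit. Unset Printing Implicit Defensive.
Import Order.TTheory GRing.Theory Num.Theory.
Local Open Scope ring_scope.

(* A simply laced simple Lie algebra of rank r is encoded by its Cartan matrix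
   C : an indecomposable, symmetric, positive definite generalized Cartan matrix
   with diagonal entries 2 and off-diagonal entries in {0,-1} (ADE type). *)
Definition simply_laced_cartan (r : nat) (C : 'M[int]_r) : Prop :=
  [/\ (0 < r)%N,
      (forall i, C i i = 2) /\
      (forall i j, i != j -> C i j = 0 \/ C i j = -1),
      C^T = C,
      (forall v : 'rV[rat]_r, v != 0 ->
          0 < (v *m map_mx (fun z : int => z%:~R : rat) C *m v^T) 0 0) &
      (forall S : {set 'I_r}, S != set0 -> S != setT ->
          exists i j, [/\ i \in S, j \notin S & C i j != 0])].

(* Weight lattice P = (+)_i Z w_i : coordinates in the basis of fundamental
   weights; w_i is the i-th unit row vector. *)
Definition fw (r : nat) (i : 'I_r) : 'rV[int]_r := delta_mx 0 i.

Definition intmx_rat (m n : nat) (M : 'M[int]_(m, n)) : 'M[rat]_(m, n) :=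
  map_mx (fun z : int => z%:~R : rat) M.

(* Invariant form normalized so that roots have square length 2:
   (w_i, w_j) = (C^{-1})_{ij}. *)
Definition wform (r : nat) (C : 'M[int]_r) (mu la : 'rV[int]_r) : rat :=
  (intmx_rat mu *m invmx (intmx_rat C) *m (intmx_rat la)^T) 0 0.

(* K plays the role of C_q; qpow x stands for q^x, x rational
   (a compatible system of fractional powers of q). *)
Definition qpow_hom (K : fieldType) (qpow : rat -> K) : Prop :=
  qpow 0 = 1 /\ forall x y, qpow (x + y) = qpow x * qpow y.

Definition is_QT (r : nat) (C : 'M[int]_r) (K : fieldType) (qpow : rat -> K)
    (A : algType K) (X Y : 'rV[int]_r -> A) : Prop :=
  [/\ X 0 = 1, Y 0 = 1,
      (forall m m', X m * X m' = X (m + m')),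
      (forall l l', Y l * Y l' = Y (l + l')) &
      (forall m l, X m * Y l = qpow (- 4 * wform C m l) *: (Y l * X m))].

Definition is_alg_aut (K : fieldType) (A : algType K) (f finv : A -> A) : Prop :=
  [/\ cancel f finv /\ cancel finv f,
      (forall x y, f (x + y) = f x + f y),
      (forall x y, f (x * y) = f x * f y),
      f 1 = 1 &
      (forall (k : K) x, f (k *: x) = k *: f x)].

Definition is_tau_plus (r : nat) (C : 'M[int]_r) (K : fieldType) (qpow : rat -> K)
    (A : algType K) (X Y : 'rV[int]_r -> A) (tp : A -> A) : Prop :=
  (forall i, tp (X (fw i)) = qpow (- 2 * wform C (fw i) (fw i)) *: (Y (fw i) * X (fw i)))
  /\ (forall l, tp (Y l) = Y l).

Definition is_tau_minus (r : nat) (C : 'M[int]_r) (K : fieldType) (qpow : rat -> K)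
    (A : algType K) (X Y : 'rV[int]_r -> A) (tm : A -> A) : Prop :=
  (forall m, tm (X m) = X m)
  /\ (forall i, tm (Y (fw i)) = qpow (2 * wform C (fw i) (fw i)) *: (X (fw i) * Y (fw i))).

Inductive gen := Tp | Tm | Tpi | Tmi.

Definition mx2 (a b c d : int) : 'M[int]_2 :=
  \matrix_(i < 2, j < 2)
    if (i : nat) == 0%N then (if (j : nat) == 0%N then a else b)
    else (if (j : nat) == 0%N then c else d).

Definition gen_mx (g : gen) : 'M[int]_2 :=
  match g with
  | Tp => mx2 1 1 0 1
  | Tpi => mx2 1 (-1) 0 1
  | Tm => mx2 1 0 1 1
  | Tmi => mx2 1 0 (-1) 1
  end.

Definition word_mx (w : seq gen) : 'M[int]_2 :=
  foldr (fun g M => gen_mx g *m M) 1%:M w.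

(* A_gamma = A_{M_k} o ... o A_{M_1} *)
Definition word_aut (A : Type) (tp tpi tm tmi : A -> A) (w : seq gen) (x : A) : A :=
  foldl (fun y g => match g with
                    | Tp => tp y | Tpi => tpi y | Tm => tm y | Tmi => tmi y end) x w.

Definition i0 : 'I_2 := @Ordinal 2 0 erefl.
Definition i1 : 'I_2 := @Ordinal 2 1 erefl.

(* Work with the Weyl-ordered monomials W(l, m) = q^(-2(l,m)) Y^l X^m.  The
   commutation relation of QT_g becomes W(v) W(v') = q^(2 w(v,v')) W(v + v')
   for the symplectic form w((l,m),(l',m')) = (l,m') - (m,l'), so m |-> W(m,m)
   is multiplicative.  It agrees with m |-> tau_+(X^m) on fundamental weights,
   hence everywhere; likewise tau_-(Y^l) = W(l,l).  It follows that
   tau_+ W(l,m) = W(l+m, m) and tau_- W(l,m) = W(l, l+m): every generator, and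
   therefore every word gamma, acts on Weyl monomials through its matrix,
   A_gamma W(l,m) = W(rl + am, pl + bm).  Going back to the ordering Y^l X^m
   costs q^(2(l,m) - 2(rl+am, pl+bm)), which is the stated power of q because
   br - ap = 1. *)

From HB Require Import structures.
From mathcomp Require Import all_boot all_order all_algebra.
From mathcomp Require Import ring.
Set Implicit Arguments. Unset Strict Implicit. Unset Printing Implicit Defensive.
Import Order.TTheory GRing.Theory Num.Theory.
Local Open Scope ring_scope.

Section ExpHom.
Variables (R : pzRingType) (r : nat).

Definition exp_hom (G : 'rV[int]_r -> R) :=
  G 0 = 1 /\ forall m m', G (m + m') = G m * G m'.

Lemma exp_hom_eq (G H : 'rV[int]_r -> R) :
  exp_hom G -> exp_hom H -> (forall i, G (fw i) = H (fw i)) -> G =1 H.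
Proof.
move=> [G0 GD] [H0 HD] eq_fw.
have eqMn m n : G m = H m -> G (m *+ n) = H (m *+ n).
  by move=> eq_m; elim: n => [|n IHn]; rewrite ?mulr0n ?G0 ?H0 // !mulrS GD HD eq_m IHn.
have eqN m : G m = H m -> G (- m) = H (- m).
  move=> eq_m; rewrite -[G _]mulr1 -H0 -(subrr m) HD -eq_m mulrA -GD addNr G0.
  by rewrite mul1r.
have eqMz m k : G m = H m -> G (m *~ k) = H (m *~ k).
  by case: k => n eq_m; rewrite ?NegzE ?mulrNz; [apply: eqMn | apply/eqN/eqMn].
move=> m; rewrite (row_sum_delta m).
apply: (big_ind (fun v => G v = H v)) => [|u v eq_u eq_v|j _]; first by rewrite G0 H0.
  by rewrite GD HD eq_u eq_v.
by rewrite -[m 0 j]intz scaler_int; apply/eqMz/eq_fw.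
Qed.

End ExpHom.

Section AlgAut.
Variables (K : fieldType) (A : algType K).

Lemma alg_aut_inv (f finv : A -> A) : is_alg_aut f finv -> is_alg_aut finv f.
Proof.
case=> [[fK finvK] fD fM f1 fZ]; split=> [//||||].
- by move=> x y; apply: (can_inj fK); rewrite fD !finvK.
- by move=> x y; apply: (can_inj fK); rewrite fM !finvK.
- by apply: (can_inj fK); rewrite f1 finvK.
- by move=> k x; apply: (can_inj fK); rewrite fZ !finvK.
Qed.

Lemma word_autZ (tp tpi tm tmi : A -> A) :
    is_alg_aut tp tpi -> is_alg_aut tm tmi ->
  forall w k x, word_aut tp tpi tm tmi w (k *: x) = k *: word_aut tp tpi tm tmi w x.
Proof.
move=> /[dup] /alg_aut_inv [_ _ _ _ tpiZ] [_ _ _ _ tpZ].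
move=> /[dup] /alg_aut_inv [_ _ _ _ tmiZ] [_ _ _ _ tmZ].
by elim=> [//|[] w IHw] k x /=; rewrite -IHw ?tpZ ?tmZ ?tpiZ ?tmiZ.
Qed.

Lemma alg_aut_exp_hom r (f finv : A -> A) (G : 'rV[int]_r -> A) :
  is_alg_aut f finv -> exp_hom G -> exp_hom (f \o G).
Proof. by case=> _ _ fM f1 _ [G0 GD]; split=> [|m m'] /=; rewrite ?G0 ?GD. Qed.

End AlgAut.

Lemma sl2_exponent (R : comPzRingType) (x y z a b p r : R) : b * r - a * p = 1 ->
  2 * y + - 2 * (r * p * x + (r * b + a * p) * y + a * b * z)
  = - 2 * z * (a * b) - 4 * y * (a * p) - 2 * x * (p * r).
Proof. by move=> det1; rewrite -{1}[y]mulr1 -det1; ring. Qed.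

Section WordMatrix.
Variable r : nat.

(* A pair [(l, m)] stands for the exponents of [Y^l X^m];
   [mx_act M (l, m) = (l', m')] where [(m', l') = (m, l) M]. *)
Definition mx_act (M : 'M[int]_2) (v : 'rV[int]_r * 'rV[int]_r) :=
  (v.1 *~ M i1 i1 + v.2 *~ M i0 i1, v.1 *~ M i1 i0 + v.2 *~ M i0 i0).

Lemma mulmx2E (M N : 'M[int]_2) i j :
  (M *m N) i j = M i i0 * N i0 j + M i i1 * N i1 j.
Proof.
rewrite mxE big_ord_recl big_ord1.
by congr (M _ _ * N _ _ + M _ _ * N _ _); apply: val_inj.
Qed.

Lemma mxE_mulrz (v : 'rV[int]_r) k i j : (v *~ k) i j = v i j * k.
Proof. by rewrite -scaler_int mxE intz mulrC. Qed.

Lemma mx_actM (M N : 'M[int]_2) (v : 'rV[int]_r * 'rV[int]_r) :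
  mx_act (M *m N) v = mx_act N (mx_act M v).
Proof.
by congr pair; apply/matrixP => i j; rewrite !mulmx2E !(mxE, mxE_mulrz); ring.
Qed.

Lemma word_mx_det w :
  word_mx w i0 i0 * word_mx w i1 i1 - word_mx w i0 i1 * word_mx w i1 i0 = 1.
Proof.
elim: w => [|g w IHw] /=; first by rewrite !mxE.
by rewrite -IHw; case: g; rewrite !mulmx2E !mxE /=; ring.
Qed.

End WordMatrix.

Fact wform_is_zmod_morphism r (C : 'M[int]_r) m : zmod_morphism (wform C m).
Proof.
move=> l l'; rewrite /wform /intmx_rat map_mxB linearB /= mulmxBr.
by rewrite [LHS]mxE [X in _ + X]mxE.
Qed.

HB.instance Definition _ r (C : 'M[int]_r) m :=
  GRing.isZmodMorphism.Build _ _ (wform C m) (wform_is_zmod_morphism C m).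

Section WeightForm.
Variables (r : nat) (C : 'M[int]_r).
Hypothesis C_sym : C^T = C.

Lemma wformC m l : wform C m l = wform C l m.
Proof.
rewrite /wform -[in LHS](trmxK (_ *m (intmx_rat l)^T)) [in LHS]mxE.
rewrite !trmx_mul trmxK trmx_inv.
have -> : (intmx_rat C)^T = intmx_rat C.
  by apply/matrixP => i j; rewrite -[in RHS]C_sym !mxE.
by rewrite mulmxA.
Qed.

Lemma wform0l l : wform C 0 l = 0.
Proof. by rewrite wformC raddf0. Qed.

Lemma wformDl m m' l : wform C (m + m') l = wform C m l + wform C m' l.
Proof. by rewrite wformC raddfD /= !(wformC l). Qed.

Lemma wformMzl m k l : wform C (m *~ k) l = wform C m l *~ k.
Proof. by rewrite wformC raddfMz /= (wformC l). Qed.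

Lemma wform_mx_act (M : 'M[int]_2) l m :
  M i0 i0 * M i1 i1 - M i0 i1 * M i1 i0 = 1 ->
  let v := mx_act M (l, m) in
  2 * wform C l m + - 2 * wform C v.1 v.2 =
  - 2 * wform C m m * (M i0 i1 * M i0 i0)%:~R
  - 4 * wform C m l * (M i0 i1 * M i1 i0)%:~R
  - 2 * wform C l l * (M i1 i0 * M i1 i1)%:~R.
Proof.
move=> /(congr1 (intr : int -> rat)); rewrite intrB !intrM => det1 /=.
rewrite (wformC m l) -(sl2_exponent (wform C l l) (wform C l m) (wform C m m) det1).
congr (_ + _ * _); rewrite raddfD /= !wformDl !raddfMz /= !wformMzl (wformC m l); ring.
Qed.

End WeightForm.

Section QuantumTorus.
Variables (r : nat) (C : 'M[int]_r).
Hypothesis C_sym : C^T = C.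
Variables (K : fieldType) (qpow : rat -> K) (A : algType K) (X Y : 'rV[int]_r -> A).
Hypotheses (qpow_morph : qpow_hom qpow) (QT : is_QT C qpow X Y).

Lemma qpow0 : qpow 0 = 1. Proof. by case: qpow_morph. Qed.
Lemma qpowD x y : qpow (x + y) = qpow x * qpow y. Proof. by case: qpow_morph. Qed.

Lemma scale_qpow_eq0 x (a : A) : x = 0 -> qpow x *: a = a.
Proof. by move->; rewrite qpow0 scale1r. Qed.

Lemma X_exp_hom : exp_hom X.
Proof. by case: QT => X0 _ XD _ _; split=> // m m'; rewrite XD. Qed.

Lemma Y_exp_hom : exp_hom Y.
Proof. by case: QT => _ Y0 _ YD _; split=> // m m'; rewrite YD. Qed.

Definition weyl (v : 'rV[int]_r * 'rV[int]_r) : A :=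
  qpow (- 2 * wform C v.1 v.2) *: (Y v.1 * X v.2).

Lemma weyl_mul v v' :
  weyl v * weyl v' =
  qpow (2 * (wform C v.1 v'.2 - wform C v.2 v'.1)) *: weyl (v.1 + v'.1, v.2 + v'.2).
Proof.
case: QT => _ _ XD YD XY.
rewrite /weyl -scalerAl -scalerAr mulrA -(mulrA (Y _)) XY -scalerAr -scalerAl.
rewrite mulrA YD -mulrA XD !scalerA -!qpowD /=; congr (qpow _ *: _).
by rewrite (wformDl C_sym) !raddfD /= (wformC C_sym v.2 v'.1); ring.
Qed.

Lemma Y_weyl l : Y l = weyl (l, 0).
Proof.
by case: QT => X0 _ _ _ _; rewrite /weyl /= X0 mulr1 raddf0 mulr0 scale_qpow_eq0.
Qed.

Lemma X_weyl m : X m = weyl (0, m).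
Proof.
by case: QT => _ Y0 _ _ _; rewrite /weyl /= Y0 mul1r (wform0l C_sym) mulr0 scale_qpow_eq0.
Qed.

Lemma YX_weyl l m : Y l * X m = qpow (2 * wform C l m) *: weyl (l, m).
Proof. by rewrite /weyl scalerA -qpowD scale_qpow_eq0 //=; ring. Qed.

Lemma weyl_diag_exp_hom : exp_hom (fun m => weyl (m, m)).
Proof.
split=> [|m m']; first by rewrite -Y_weyl; case: QT.
by rewrite weyl_mul /= subrr mulr0 scale_qpow_eq0.
Qed.

Variables (tp tpi tm tmi : A -> A).
Hypotheses (tp_aut : is_alg_aut tp tpi) (tm_aut : is_alg_aut tm tmi).
Hypotheses (tau_plus : is_tau_plus C qpow X Y tp) (tau_minus : is_tau_minus C qpow X Y tm).

Lemma tp_X m : tp (X m) = weyl (m, m).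
Proof.
apply: (exp_hom_eq (alg_aut_exp_hom tp_aut X_exp_hom) weyl_diag_exp_hom) => i.
exact: tau_plus.1.
Qed.

Lemma tm_Y l : tm (Y l) = weyl (l, l).
Proof.
apply: (exp_hom_eq (alg_aut_exp_hom tm_aut Y_exp_hom) weyl_diag_exp_hom) => i /=.
rewrite tau_minus.2 X_weyl Y_weyl weyl_mul scalerA -qpowD /= addr0 add0r.
by rewrite scale_qpow_eq0 // raddf0; ring.
Qed.

Lemma tp_weyl l m : tp (weyl (l, m)) = weyl (l + m, m).
Proof.
case: tp_aut => _ _ tpM _ tpZ.
rewrite {1}/weyl tpZ tpM tau_plus.2 tp_X Y_weyl weyl_mul scalerA -qpowD /= add0r.
by rewrite scale_qpow_eq0 // (wform0l C_sym); ring.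
Qed.

Lemma tm_weyl l m : tm (weyl (l, m)) = weyl (l, l + m).
Proof.
case: tm_aut => _ _ tmM _ tmZ.
rewrite {1}/weyl tmZ tmM tau_minus.1 tm_Y X_weyl weyl_mul scalerA -qpowD /= addr0.
by rewrite scale_qpow_eq0 // raddf0; ring.
Qed.

Lemma tpi_weyl l m : tpi (weyl (l, m)) = weyl (l - m, m).
Proof. by case: tp_aut => -[tpK _] _ _ _ _; rewrite -{1}(subrK m l) -tp_weyl tpK. Qed.

Lemma tmi_weyl l m : tmi (weyl (l, m)) = weyl (l, m - l).
Proof.
by case: tm_aut => -[tmK _] _ _ _ _; rewrite -{1}(subrK l m) addrC -tm_weyl tmK.
Qed.

Lemma word_aut_weyl w v :
  word_aut tp tpi tm tmi w (weyl v) = weyl (mx_act (word_mx w) v).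
Proof.
elim: w v => [|g w IHw] [l m].
  by rewrite /mx_act !mxE /= mulr1z mulr0z addr0 add0r.
rewrite [word_mx _]/= mx_actM -IHw /=; congr (word_aut _ _ _ _ w _).
case: g; rewrite ?(tp_weyl, tm_weyl, tpi_weyl, tmi_weyl) /mx_act !mxE /=.
all: rewrite ?(mulr1z, mulr0z, mulrN1z, addr0, add0r) //.
by rewrite addrC.
Qed.

End QuantumTorus.

Theorem mainTheorem3 (r : nat) (C : 'M[int]_r) (HC : simply_laced_cartan C)
    (K : fieldType) (qpow : rat -> K) (Hq : qpow_hom qpow)
    (A : algType K) (X Y : 'rV[int]_r -> A) (HQT : is_QT C qpow X Y)
    (tp tpi tm tmi : A -> A)
    (Htp_aut : is_alg_aut tp tpi) (Htm_aut : is_alg_aut tm tmi)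
    (Htp : is_tau_plus C qpow X Y tp) (Htm : is_tau_minus C qpow X Y tm)
    (w : seq gen) (la mu : 'rV[int]_r) :
  let g := word_mx w in
  let b := g i0 i0 in let a := g i0 i1 in
  let p := g i1 i0 in let rr := g i1 i1 in
  word_aut tp tpi tm tmi w (Y la * X mu)
  = qpow (- 2 * wform C mu mu * (a * b)%:~R
          - 4 * wform C mu la * (a * p)%:~R
          - 2 * wform C la la * (p * rr)%:~R)
    *: (Y (la *~ rr + mu *~ a) * X (la *~ p + mu *~ b)).
Proof.
case: HC => _ _ C_sym _ _ /=.
rewrite (YX_weyl C X Y Hq) (word_autZ Htp_aut Htm_aut).
rewrite (word_aut_weyl C_sym Hq HQT Htp_aut Htm_aut Htp Htm) /weyl scalerA -(qpowD Hq) /=.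
by rewrite (wform_mx_act C_sym) // word_mx_det.
Qed.
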